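(* Let $p$ be a prime, $A\in \mathbb{Z}^{m\times n}$, $b\in \mathbb{Z}^m$. If $\{x:Ax=b\}$ contains a $p$-adic point, then the $p$-adic points of $\{x:Ax=b\}$ form a dense subset of it. In particular, a nonempty rational polyhedron contains a $p$-adic point if, and only if, its affine hull contains a $p$-adic point.
   Context: A $p$-adic rational is a number $a/p^k$ with $a,k\in\mathbb{Z}$, $k\ge0$; a vector is $p$-adic if all entries are $p$-adic rationals. *)

From HB Require Import structures.
From mathcomp Require Import all_boot all_order all_algebra.
From mathcomp Require Import reals.
Set Implicit Arguments. Unset Strict Implicit. Unset Printing Implicit Defensive.
Import Order.TTheory GRing.Theory Num.Theory.
Local Open Scope ring_scope.

Definition padic_rat (R : realType) (p : nat) (r : R) : Prop :=
  exists (a : int) (k : nat), r = a%:~R / (p%:R) ^+ k.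

Definition padic_vec (R : realType) (p n : nat) (x : 'cV[R]_n) : Prop :=
  forall i : 'I_n, padic_rat p (x i ord0).

Definition affine_sol (R : realType) (m n : nat) (A : 'M[int]_(m, n))
  (b : 'cV[int]_m) (x : 'cV[R]_n) : Prop :=
  map_mx (fun z : int => z%:~R) A *m x = map_mx (fun z : int => z%:~R) b.

Definition in_polyhedron (R : realType) (k n : nat) (C : 'M[rat]_(k, n))
  (d : 'cV[rat]_k) (x : 'cV[R]_n) : Prop :=
  forall i : 'I_k, (map_mx (@ratr R) C *m x) i ord0 <= ratr (d i ord0).

Definition affine_hull (R : realType) (n : nat) (S : 'cV[R]_n -> Prop)
  (x : 'cV[R]_n) : Prop :=
  exists (k : nat) (pts : 'I_k -> 'cV[R]_n) (lam : 'I_k -> R),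
    (forall i, S (pts i)) /\ \sum_(i < k) lam i = 1 /\
    x = \sum_(i < k) lam i *: pts i.

From HB Require Import structures.
From mathcomp Require Import all_boot all_order all_algebra.
From mathcomp Require Import reals.
From mathcomp Require Import lra ring boolp.
Import Order.TTheory GRing.Theory Num.Theory.
Local Open Scope ring_scope.

(* If x0 is a p-adic and x a real solution of A x = b, then x - x0 lies in the
   real kernel of A, which is spanned by the columns of an integer matrix L
   (a rational kernel basis with denominators cleared).  Writing x = x0 + L u
   and truncating the base-p expansions of the coordinates of u yields p-adic
   solutions x0 + L w arbitrarily close to x.
   For P = {x | C x <= d}, averaging points that witness each inequality which
   is strict somewhere on P gives a relative interior point c.  The rows tight
   at c are tight on all of P, so they define an affine subspace containing the
   affine hull of P.  A p-adic point of the hull makes the p-adic points of that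
   subspace dense, and one close enough to c still satisfies the strict rows. *)

Local Notation intmx := (map_mx (fun z : int => z%:~R)).

Lemma rat_mx_common_den {m n} (M : 'M[rat]_(m, n)) :
  exists2 D : int, 0 < D & exists L : 'M[int]_(m, n), D%:~R *: M = intmx L.
Proof.
pose den ij := denq (M ij.1 ij.2).
exists (\prod_ij den ij); first by apply: prodr_gt0 => ij _; exact: denq_gt0.
exists (\matrix_(i, j) ((\prod_(ij | ij != (i, j)) den ij) * numq (M i j))).
apply/matrixP => i j; rewrite !mxE (bigD1 (i, j)) //= !rmorphM /= numqE.
by rewrite /den /=; ring.
Qed.

Section RealLinearAlgebra.
Context {R : realType}.

Lemma map_ratr_intmx {m n} (M : 'M[int]_(m, n)) :
  map_mx (@ratr R) (intmx M : 'M[rat]_(m, n)) = intmx M.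
Proof. by apply/matrixP => i j; rewrite !mxE rmorph_int. Qed.

Lemma mulmx_small {m n} (M : 'M[R]_(m, n)) (eps : R) : 0 < eps ->
  exists2 del : R, 0 < del & forall v : 'cV_n,
    (forall j, `|v j ord0| < del) -> forall i, `|(M *m v) i ord0| < eps.
Proof.
move=> eps_gt0; pose S i := \sum_j `|M i j|.
have S0 i : 0 <= S i by apply: sumr_ge0.
pose del := \big[Num.min/1]_i (eps / (1 + S i)).
have del_gt0 : 0 < del.
  by apply: lt_bigmin => // i _; apply: divr_gt0 => //; have := S0 i; lra.
exists del => // v v_small i.
have : del * (1 + S i) <= eps.
  by rewrite -ler_pdivlMr ?bigmin_le //; have := S0 i; lra.
have : `|(M *m v) i ord0| <= S i * del.
  rewrite mxE mulr_suml; apply: le_trans (ler_norm_sum _ _ _) _.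
  by apply: ler_sum => j _; rewrite normrM ler_wpM2l // ltW ?v_small.
by have := S0 i; nra.
Qed.

Lemma mulmx_lt_near {m n} (M : 'M[R]_(m, n)) (a : 'cV_m) (c : 'cV_n) :
  exists2 del : R, 0 < del & forall y : 'cV_n,
    (forall j, `|y j ord0 - c j ord0| < del) ->
    forall i, (M *m c) i ord0 < a i ord0 -> (M *m y) i ord0 < a i ord0.
Proof.
pose gap i :=
  if (M *m c) i ord0 < a i ord0 then a i ord0 - (M *m c) i ord0 else 1.
have gap0 : 0 < \big[Num.min/1]_i gap i.
  by apply: lt_bigmin => // i _; rewrite /gap; case: ifP => //; rewrite subr_gt0.
have [del del_gt0 M_small] := mulmx_small M _ gap0.
exists del => // y y_near i ci_lt.
have near_c : `|(M *m (y - c)) i ord0| < \big[Num.min/1]_i gap i.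
  by apply: M_small => j; rewrite !mxE.
have -> : (M *m y) i ord0 = (M *m c) i ord0 + (M *m (y - c)) i ord0.
  by rewrite mulmxBr; move: (M *m y) (M *m c) => u v; rewrite !mxE subrKC.
have := bigmin_le 1 i gap; rewrite /gap ci_lt.
have := ler_norm ((M *m (y - c)) i ord0); lra.
Qed.

Lemma rat_kernel_int_span {m n} (A : 'M[rat]_(m, n)) :
  exists L : 'M[int]_n, map_mx (@ratr R) A *m intmx L = 0 /\
    forall v : 'cV[R]_n, map_mx ratr A *m v = 0 -> exists u, v = intmx L *m u.
Proof.
pose K := (kermx A^T)^T.
have AK : A *m K = 0 by rewrite -[A]trmxK -trmx_mul mulmx_ker trmx0.
have [D D0 [L DKL]] := rat_mx_common_den K.
have KL : map_mx (@ratr R) K = (D%:~R)^-1 *: intmx L.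
  rewrite -map_ratr_intmx -DKL map_mxZ rmorph_int scalerA mulVf ?scale1r //.
  by rewrite intr_eq0 gt_eqF.
exists L; split.
  by rewrite -map_ratr_intmx -DKL -map_mxM -scalemxAr AK scaler0 map_mx0.
move=> v Av0.
have : (v^T <= kermx (map_mx ratr A)^T)%MS.
  by apply/sub_kermxP; rewrite -trmx_mul Av0 trmx0.
rewrite map_trmx -map_kermx => /submxP [w vE].
exists ((D%:~R)^-1 *: w^T).
by rewrite -[v]trmxK vE trmx_mul map_trmx -/K KL -scalemxAl scalemxAr.
Qed.

End RealLinearAlgebra.

Section PadicPoints.
Context {R : realType} (p : nat).
Hypothesis p_prime : prime p.

Let p_gt0 : (0 : R) < p%:R.
Proof. by rewrite ltr0n prime_gt0. Qed.

Lemma padic_rat_int (z : int) : padic_rat p (z%:~R : R).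
Proof. by exists z, 0%N; rewrite expr0 divr1. Qed.

Lemma padic_ratD (x y : R) :
  padic_rat p x -> padic_rat p y -> padic_rat p (x + y).
Proof.
move=> [a [k ->]] [b [l ->]]; exists (a * p%:Z ^+ l + b * p%:Z ^+ k), (k + l)%N.
have pX_neq0 j : p%:R ^+ j != 0 :> R by rewrite expf_neq0 // gt_eqF.
rewrite rmorphD !rmorphM !rmorphXn /= exprD.
by field; rewrite !pX_neq0.
Qed.

Lemma padic_ratMz (z : int) (x : R) : padic_rat p x -> padic_rat p (z%:~R * x).
Proof. by move=> [a [k ->]]; exists (z * a), k; rewrite rmorphM mulrA. Qed.

Lemma padic_rat_sum (I : finType) (F : I -> R) :
  (forall i, padic_rat p (F i)) -> padic_rat p (\sum_i F i).
Proof.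
move=> pF; apply: big_ind => //; last by move=> ? ?; apply: padic_ratD.
by have := padic_rat_int 0; rewrite mulr0z.
Qed.

Lemma padic_vecD {n} (x y : 'cV[R]_n) :
  padic_vec p x -> padic_vec p y -> padic_vec p (x + y).
Proof. by move=> px py i; rewrite mxE; apply: padic_ratD. Qed.

Lemma padic_vec_intmx_mul {m n} (L : 'M[int]_(m, n)) (w : 'cV[R]_n) :
  padic_vec p w -> padic_vec p (intmx L *m w).
Proof.
move=> pw i; rewrite mxE; apply: padic_rat_sum => j.
by rewrite mxE; apply: padic_ratMz.
Qed.

Definition padic_floor (k : nat) (t : R) : R :=
  (Num.floor (t * p%:R ^+ k))%:~R / p%:R ^+ k.

Lemma padic_rat_floor k t : padic_rat p (padic_floor k t).
Proof. by exists (Num.floor (t * p%:R ^+ k)), k. Qed.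

Lemma padic_floor_dist k t : `|padic_floor k t - t| < (p%:R ^+ k)^-1.
Proof.
have pk_gt0 : (0 : R) < p%:R ^+ k by rewrite exprn_gt0.
rewrite /padic_floor; set f := Num.floor _.
have /andP [f_le f_gt] := floor_itv (t * p%:R ^+ k).
rewrite -/f intrD in f_le f_gt.
have -> : f%:~R / p%:R ^+ k - t = (f%:~R - t * p%:R ^+ k) / p%:R ^+ k.
  by field; rewrite gt_eqF.
rewrite normrM normfV (gtr0_norm pk_gt0) -[X in _ < X]mul1r.
rewrite ltr_pM2r ?invr_gt0 //.
by rewrite ler0_norm ?subr_le0 //; lra.
Qed.

Lemma ex_inv_expn_lt (d : R) : 0 < d -> exists k, (p%:R ^+ k)^-1 < d.
Proof.
move=> d_gt0; have /archi_boundP : 0 <= d^-1 by rewrite invr_ge0 ltW.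
set k := Num.Def.archi_bound _ => d_lt_k; exists k.
rewrite invf_plt ?posrE ?exprn_gt0 //; apply: lt_le_trans d_lt_k _.
by rewrite -natrX ler_nat ltnW // ltn_expl // prime_gt1.
Qed.

Lemma padic_vec_dense {n} (u : 'cV[R]_n) (del : R) : 0 < del ->
  exists2 w, padic_vec p w & forall j, `|w j ord0 - u j ord0| < del.
Proof.
move=> del_gt0; have [k k_del] := ex_inv_expn_lt _ del_gt0.
exists (\col_j padic_floor k (u j ord0)) => j; rewrite mxE.
  exact: padic_rat_floor.
exact: lt_trans (padic_floor_dist _ _) k_del.
Qed.

Lemma padic_dense_rat_affine {m n} {A : 'M[rat]_(m, n)} {b : 'cV[rat]_m}
    {x0 x : 'cV[R]_n} {eps : R} :
  map_mx ratr A *m x0 = map_mx ratr b -> padic_vec p x0 ->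
  map_mx ratr A *m x = map_mx ratr b -> 0 < eps ->
  exists y : 'cV[R]_n, map_mx ratr A *m y = map_mx ratr b /\ padic_vec p y /\
    forall i, `|y i ord0 - x i ord0| < eps.
Proof.
move=> Ax0 px0 Ax eps_gt0.
have [L [AL0 L_span]] := rat_kernel_int_span (R := R) A.
have [u xE] : exists u, x - x0 = intmx L *m u.
  by apply: L_span; rewrite mulmxBr Ax Ax0 subrr.
have [del del_gt0 L_small] := mulmx_small (intmx L : 'M[R]_n) _ eps_gt0.
have [w pw w_near] := padic_vec_dense u _ del_gt0.
exists (x0 + intmx L *m w); split; last split.
- by rewrite mulmxDr mulmxA AL0 mul0mx addr0.
- by apply: padic_vecD => //; apply: padic_vec_intmx_mul.
- have yE : x0 + intmx L *m w - x = intmx L *m (w - u).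
    by rewrite mulmxBr -xE opprB addrA [_ + x0]addrC.
  move=> i; have -> : (x0 + intmx L *m w) i ord0 - x i ord0 =
                      (x0 + intmx L *m w - x) i ord0 by rewrite !mxE.
  by rewrite yE; apply: L_small => j; rewrite !mxE.
Qed.

End PadicPoints.

Section AffineHull.
Context {R : realType} {n : nat}.

Lemma affine_hull_self (S : 'cV[R]_n -> Prop) x : S x -> affine_hull S x.
Proof.
move=> Sx; exists 1%N, (fun=> x), (fun=> 1); split=> //.
by rewrite !big_ord1 scale1r.
Qed.

Lemma affine_hull_sub_affine {l} {S : 'cV[R]_n -> Prop} {M : 'M[R]_(l, n)} {v} :
  (forall z, S z -> M *m z = v) -> forall x, affine_hull S x -> M *m x = v.
Proof.
move=> Mv x [N [pts [lam [Spts [lam1 ->]]]]].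
rewrite mulmx_sumr; under eq_bigr => i _ do rewrite -scalemxAr Mv //.
by rewrite -scaler_suml lam1 scale1r.
Qed.

End AffineHull.

Lemma mean_mulmx_row {R : realType} {N m n} (M : 'M[R]_(m, n)) (x0 : 'cV_n)
    (z : 'I_N -> 'cV_n) i :
  (M *m (N.+1%:R^-1 *: (x0 + \sum_j z j))) i ord0 =
  N.+1%:R^-1 * ((M *m x0) i ord0 + \sum_j (M *m z j) i ord0).
Proof.
by rewrite -scalemxAr mulmxDr mulmx_sumr [LHS]mxE [X in _ * X]mxE summxE.
Qed.

Section Mean.
Context {R : realType} {N : nat} {a u0 : R} {u : 'I_N -> R}.
Hypotheses (u0_le : u0 <= a) (u_le : forall j, u j <= a).

Lemma mean_le : N.+1%:R^-1 * (u0 + \sum_j u j) <= a.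
Proof.
have : \sum_j u j <= \sum_(j < N) a by apply: ler_sum => j _.
rewrite sumr_const card_ord ler_pdivrMl ?ltr0Sn // mulr_natl mulrS.
exact: lerD.
Qed.

Lemma mean_lt i : u i < a -> N.+1%:R^-1 * (u0 + \sum_j u j) < a.
Proof.
move=> ui_lt; have : \sum_j u j < \sum_(j < N) a.
  rewrite (bigD1 i) //= [ltRHS](bigD1 i) //=.
  by apply: ltr_leD => //; apply: ler_sum => j _.
rewrite sumr_const card_ord ltr_pdivrMl ?ltr0Sn // mulr_natl mulrS.
exact: ler_ltD.
Qed.

End Mean.

Section Polyhedron.
Context {R : realType} {k n : nat} (C : 'M[rat]_(k, n)) (d : 'cV[rat]_k).

Local Notation P := (@in_polyhedron R k n C d).
Local Notation CR := (map_mx (@ratr R) C).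
Local Notation tight i z := ((CR *m z) i ord0 = ratr (d i ord0)).
Local Notation strict i z := ((CR *m z) i ord0 < ratr (d i ord0)).

Lemma polyhedron_relint_point : (exists x, P x) ->
  exists2 c, P c & forall i, (exists2 z, P z & strict i z) -> strict i c.
Proof.
move=> [x0 Px0].
have /choice [z zP] : forall i,
    exists z, P z /\ ((exists2 z, P z & strict i z) -> strict i z).
  move=> i; have [[z Pz zi]|no_strict] := pselect (exists2 z, P z & strict i z).
    by exists z.
  by exists x0; split=> // /no_strict.
(* x0 is included so that the average also exists when k = 0. *)
exists (k.+1%:R^-1 *: (x0 + \sum_j z j)).
  move=> i; rewrite mean_mulmx_row.
  by apply: (mean_le (Px0 i)) => j; case: (zP j).
move=> i some_strict; have zi_strict := proj2 (zP i) some_strict.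
rewrite mean_mulmx_row.
by apply: (mean_lt (Px0 i) _ i zi_strict) => j; case: (zP j).
Qed.

Lemma implicit_equality_system {c : 'cV[R]_n} :
  P c -> (forall i, (exists2 z, P z & strict i z) -> strict i c) ->
  exists C' : 'M[rat]_(k, n), exists d' : 'cV[rat]_k,
    (forall z, P z -> map_mx ratr C' *m z = map_mx ratr d') /\
    forall y, map_mx ratr C' *m y = map_mx ratr d' ->
      forall i, tight i c -> tight i y.
Proof.
move=> Pc c_relint; pose J i := (CR *m c) i ord0 == ratr (d i ord0).
pose C' := \matrix_(i, j) if J i then C i j else 0.
pose d' := \col_i if J i then d i ord0 else 0.
have C'E (z : 'cV[R]_n) i :
    (map_mx ratr C' *m z) i ord0 = if J i then (CR *m z) i ord0 else 0.
  rewrite !mxE; case: ifP => Ji; first by apply: eq_bigr => j _; rewrite !mxE Ji.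
  by rewrite big1 // => j _; rewrite !mxE Ji rmorph0 mul0r.
have d'E i : map_mx (@ratr R) d' i ord0 = if J i then ratr (d i ord0) else 0.
  by rewrite !mxE; case: ifP; rewrite ?rmorph0.
have J_tight i z : J i -> P z -> tight i z.
  move=> /eqP c_tight Pz; apply/eqP; rewrite eq_le Pz leNgt /=.
  apply/negP => z_strict.
  by have := c_relint i (ex_intro2 _ _ z Pz z_strict); rewrite c_tight ltxx.
exists C', d'; split.
  move=> z Pz; apply/matrixP => i j; rewrite (ord1 j) C'E d'E.
  by case: ifP => // Ji; apply: J_tight.
move=> y /matrixP C'y i c_tight; have Ji : J i by apply/eqP.
by have := C'y i ord0; rewrite C'E d'E Ji.
Qed.

Lemma padic_point_of_affine_hull p : prime p -> (exists x, P x) ->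
  forall x, affine_hull P x -> padic_vec p x -> exists y, P y /\ padic_vec p y.
Proof.
move=> p_prime /polyhedron_relint_point [c Pc c_relint] x x_hull px.
have [C' [d' [C'P C'tight]]] := implicit_equality_system Pc c_relint.
have [del del_gt0 c_near] := mulmx_lt_near CR (map_mx ratr d) c.
have [y [C'y [py y_near]]] := padic_dense_rat_affine _ p_prime
  (affine_hull_sub_affine C'P _ x_hull) px (C'P c Pc) del_gt0.
exists y; split=> // i.
have := Pc i; rewrite le_eqVlt => /orP [/eqP c_tight | c_strict].
  by rewrite (C'tight y C'y i c_tight).
have := c_near y y_near i; rewrite [map_mx _ d _ _]mxE => /(_ c_strict).
exact: ltW.
Qed.

End Polyhedron.

Theorem lemma2p2 (R : realType) (p m n : nat) (A : 'M[int]_(m, n))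
    (b : 'cV[int]_m) :
  prime p ->
  ((exists x : 'cV[R]_n, affine_sol A b x /\ padic_vec p x) ->
   forall x : 'cV[R]_n, affine_sol A b x ->
   forall eps : R, 0 < eps ->
   exists y : 'cV[R]_n, affine_sol A b y /\ padic_vec p y /\
     forall i : 'I_n, `|y i ord0 - x i ord0| < eps)
  /\
  (forall (k : nat) (C : 'M[rat]_(k, n)) (d : 'cV[rat]_k),
   (exists x : 'cV[R]_n, in_polyhedron C d x) ->
   ((exists x : 'cV[R]_n, in_polyhedron C d x /\ padic_vec p x) <->
    (exists x : 'cV[R]_n, affine_hull (in_polyhedron C d) x /\ padic_vec p x))).
Proof.
move=> p_prime; split.
  move=> [x0 [Ax0 px0]] x Ax eps eps_gt0.
  rewrite /affine_sol -!(map_ratr_intmx A) -!(map_ratr_intmx b) in Ax0 Ax *.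
  exact: (padic_dense_rat_affine _ p_prime Ax0 px0 Ax eps_gt0).
move=> k C d P_neq0; split.
  by move=> [x [Px px]]; exists x; split=> //; apply: affine_hull_self.
move=> [x [x_hull px]].
exact: padic_point_of_affine_hull C d p p_prime P_neq0 x x_hull px.
Qed.
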